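(* (1) For all $\mathit{pts},\mathit{pts}'\in\mathit{PTS}$ with $\mathit{pts}\le\mathit{pts}'$, and every state $(\gamma,p)$ with $\gamma\in\Gamma$, $p\in[0,1]$: if $(\gamma,p)\models\mathit{pts}$ then $(\gamma,p)\models\mathit{pts}'$. (2) Let $e$ be an arithmetic expression, $\mathit{pts}\in\mathit{PTS}$, and suppose the judgment $e:\mathit{pts}\to A$ holds and $(\gamma,p)\models\mathit{pts}$. If $\llbracket e\rrbracket\gamma\in\mathit{Addrs}$, then $(\llbracket e\rrbracket\gamma,q)\in A$ for some $q>0$.
   Context: $\mathit{Var}$ is a finite set of program variables; $\mathit{Addrs}=\{x'\mid x\in\mathit{Var}\}$ is a set of symbolic addresses, $\mathit{Val}=\mathbb{Z}\cup\mathit{Addrs}$, $\Gamma=\mathit{Var}\to\mathit{Val}$, and a state is a pair $(\gamma,p)$ with $\gamma\in\Gamma$, $p\in[0,1]$. $\mathit{Addrs}_p=\mathit{Addrs}\times[0,1]$. $\textit{Pre-PTS}$ is the set of maps $\mathit{pts}:\mathit{Var}\to 2^{\mathit{Addrs}_p}$ such that $(y',p_1),(y',p_2)\in\mathit{pts}(x)$ implies $p_1=p_2$; $A_{\mathit{pts}}(x)=\{z'\mid\exists p>0.\ (z',p)\in\mathit{pts}(x)\}$; $\mathit{PTS}$ is the set of $\mathit{pts}\in\textit{Pre-PTS}$ with $\sum_{(z',p)\in\mathit{pts}(x)}p\le 1$ for all $x$. Subtyping: $\mathit{pts}\le\mathit{pts}'$ iff $A_{\mathit{pts}}(x)\subseteq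 A_{\mathit{pts}'}(x)$ for all $x$. Satisfaction: $(\gamma,p)\models\mathit{pts}$ iff for every $x\in\mathit{Var}$, $\gamma(x)\in\mathit{Addrs}$ implies there is $q>0$ with $(\gamma(x),q)\in\mathit{pts}(x)$. Arithmetic expressions are $e::= x\mid n\mid e_1\oplus e_2$ with $x\in\mathit{Var}$, $n\in\mathbb{Z}$, $\oplus\in\{+,-,\times\}$; their semantics is $\llbracket n\rrbracket\gamma=n$, $\llbracket x\rrbracket\gamma=\gamma(x)$, and $\llbracket e_1\oplus e_2\rrbracket\gamma=\llbracket e_1\rrbracket\gamma\oplus\llbracket e_2\rrbracket\gamma$ if both are integers, and an error value $!$ otherwise. The judgment $e:\mathit{pts}\to A$ (with $A\subseteq\mathit{Addrs}_p$) is given by the rules $n:\mathit{pts}\to\emptyset$, $x:\mathit{pts}\to\mathit{pts}(x)$, and $e_1\oplus e_2:\mathit{pts}\to\emptyset$. *)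

From HB Require Import structures.
From mathcomp Require Import all_boot all_order all_algebra.
From mathcomp Require Import boolp classical_sets fsbigop reals.
Set Implicit Arguments. Unset Strict Implicit. Unset Printing Implicit Defensive.
Import Order.TTheory GRing.Theory Num.Theory.
Local Open Scope ring_scope.
Local Open Scope classical_set_scope.

Section PTS.
Variables (Var : finType) (R : realType).

(* Addrs = { x' | x in Var }: a symbolic address x' is represented by x. *)
Definition Addrs := Var.

Inductive Val := VInt of int | VAddr of Addrs.

Definition Gamma := Var -> Val.

(* Addrs_p = Addrs × [0,1]; a points-to map assigns each variable a set of
   pairs (z', p); membership in [0,1] of p is part of the well-formedness. *)
Definition ptsmap := Var -> set (Addrs * R).

Definition is_prob (p : R) : Prop := 0 <= p <= 1.

Definition pre_PTS (pts : ptsmap) : Prop :=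
  (forall x a, pts x a -> is_prob a.2) /\
  (forall x y p1 p2, pts x (y, p1) -> pts x (y, p2) -> p1 = p2).

Definition A_pts (pts : ptsmap) (x : Var) : set Addrs :=
  [set z | exists p, 0 < p /\ pts x (z, p)].

Definition PTS (pts : ptsmap) : Prop :=
  pre_PTS pts /\ forall x, (\sum_(a \in pts x) a.2) <= 1.

Definition subtype (pts pts' : ptsmap) : Prop :=
  forall x, A_pts pts x `<=` A_pts pts' x.

Definition sat (g : Gamma) (p : R) (pts : ptsmap) : Prop :=
  forall x z, g x = VAddr z -> exists q, 0 < q /\ pts x (z, q).

Inductive binop := Add | Sub | Mul.
Inductive aexp := EVar of Var | ENum of int | EOp of binop & aexp & aexp.

Definition eval_op (o : binop) (m n : int) : int :=
  match o with Add => m + n | Sub => m - n | Mul => m * n end.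

(* semantics; None is the error value ! *)
Fixpoint eval (e : aexp) (g : Gamma) : option Val :=
  match e with
  | ENum n => Some (VInt n)
  | EVar x => Some (g x)
  | EOp o e1 e2 =>
      match eval e1 g, eval e2 g with
      | Some (VInt m), Some (VInt n) => Some (VInt (eval_op o m n))
      | _, _ => None
      end
  end.

Inductive has_type (pts : ptsmap) : aexp -> set (Addrs * R) -> Prop :=
  | T_Num n : has_type pts (ENum n) set0
  | T_Var x : has_type pts (EVar x) (pts x)
  | T_Op o e1 e2 : has_type pts (EOp o e1 e2) set0.

End PTS.

From mathcomp Require Import all_boot all_order all_algebra.
From mathcomp Require Import boolp classical_sets reals.
Import Order.TTheory GRing.Theory Num.Theory.
Local Open Scope ring_scope.

Section Soundness.
Variables (Var : finType) (R : realType).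
Implicit Types (pts : ptsmap Var R) (g : Gamma Var) (p : R) (z : Addrs Var).

Lemma sat_A_pts g p pts : sat g p pts <-> forall x z, g x = VAddr z -> A_pts pts x z.
Proof. by []. Qed.

Lemma sat_subtype g p pts pts' : subtype pts pts' -> sat g p pts -> sat g p pts'.
Proof. by move=> sub /sat_A_pts sat_pts; apply/sat_A_pts => x z /sat_pts /sub. Qed.

Lemma eval_EOp_not_addr (o : binop) (e1 e2 : aexp Var) g z :
  eval (EOp o e1 e2) g <> Some (VAddr z).
Proof. by rewrite /=; case: (eval e1 g) => [[m|?]|]; case: (eval e2 g) => [[n|?]|]. Qed.

Lemma has_type_sound (e : aexp Var) g p pts (A : set (Addrs Var * R)) z :
  has_type pts e A -> sat g p pts -> eval e g = Some (VAddr z) ->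
  exists q, 0 < q /\ A (z, q).
Proof.
case=> [n|x|o e1 e2] sat_pts //=.
- by move=> [/sat_pts].
- by move/eval_EOp_not_addr.
Qed.

End Soundness.

Theorem lemma3 (Var : finType) (R : realType) :
  (forall (pts pts' : ptsmap Var R) (g : Gamma Var) (p : R),
      PTS pts -> PTS pts' -> subtype pts pts' -> is_prob p ->
      sat g p pts -> sat g p pts') /\
  (forall (e : aexp Var) (pts : ptsmap Var R) (A : set (Addrs Var * R))
          (g : Gamma Var) (p : R) (z : Addrs Var),
      PTS pts -> is_prob p -> has_type pts e A -> sat g p pts ->
      eval e g = Some (VAddr z) ->
      exists q, 0 < q /\ A (z, q)).
Proof.
split=> [pts pts' g p _ _ sub _|e pts A g p z _ _].
- exact: sat_subtype.
- exact: has_type_sound.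
Qed.
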